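(* For all positive integers $t,s$, the complete bipartite graph $K_{4t,4s+2}$ has an almost 2-perfect 8-cycle decomposition.
   Context: An 8-cycle decomposition of a graph $G$ is a collection of pairwise edge-disjoint 8-cycles in $G$ whose edge sets partition $E(G)$. For an 8-cycle $C$, an inside 8-cycle of $C$ is an 8-cycle on the same vertex set as $C$ sharing no edge with $C$. An 8-cycle decomposition $\mathcal{C}$ of $G$ is almost 2-perfect (A2P) if one can choose, for each $C\in\mathcal{C}$, an inside 8-cycle $C'$ of $C$ with all edges in $G$, such that the chosen cycles $\{C'\}$ again form an 8-cycle decomposition of $G$. *)

From mathcomp Require Import all_boot.
Set Implicit Arguments. Unset Strict Implicit. Unset Printing Implicit Defensive.

(* A simple graph: symmetric irreflexive relation e on a finite vertex type T.
   An edge is the 2-element vertex set {x, y}. *)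
Definition edges (T : finType) (e : rel T) : {set {set T}} :=
  [set [set p.1; p.2] | p in [set p : T * T | e p.1 p.2]].

Definition is_8cycle (T : finType) (e : rel T) (C : {set {set T}}) : Prop :=
  exists v : 'I_8 -> T,
    [/\ injective v,
        (forall i : 'I_8, e (v i) (v (ordS i)))
      & C = [set [set v i; v (ordS i)] | i : 'I_8]].

Definition cyc_verts (T : finType) (C : {set {set T}}) : {set T} := cover C.

Definition is_8cycle_decomp (T : finType) (e : rel T) (D : {set {set {set T}}}) : Prop :=
  (forall C, C \in D -> is_8cycle e C) /\ partition D (edges e).

Definition inside_8cycle (T : finType) (e : rel T) (C C' : {set {set T}}) : Prop :=
  [/\ is_8cycle e C', cyc_verts C' = cyc_verts C & [disjoint C' & C]].

Definition A2P_decomp (T : finType) (e : rel T) (D : {set {set {set T}}}) : Prop :=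
  is_8cycle_decomp e D /\
  exists f : {set {set T}} -> {set {set T}},
    [/\ {in D &, injective f},
        (forall C, C \in D -> inside_8cycle e C (f C))
      & is_8cycle_decomp e [set f C | C in D]].

Definition has_A2P_8cycle_decomp (T : finType) (e : rel T) : Prop :=
  exists D, A2P_decomp e D.

Definition Kbip_rel (m n : nat) : rel ('I_m + 'I_n)%type :=
  fun x y => match x, y with
             | inl _, inr _ | inr _, inl _ => true
             | _, _ => false
             end.
Arguments Kbip_rel m n : clear implicits.

From mathcomp Require Import all_boot zify.
Set Implicit Arguments. Unset Strict Implicit. Unset Printing Implicit Defensive.

(* An A2P decomposition is witnessed by a family of pairs (C, C') of 8-cycles,
   C' an inside cycle of C, such that both the C and the C' form 8-cycle
   decompositions. Such paired decompositions transport along graph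
   embeddings and glue along an edge-disjoint splitting of the graph. Since
   K_(4t, 4s+2) splits edge-disjointly into t copies of K_(4,6) and t(s-1)
   copies of K_(4,4), it suffices to exhibit paired decompositions of these
   two small graphs, which is done by computation. *)

Section CycleMaps.
Variable T : finType.
Implicit Types (e : rel T) (u v : 'I_8 -> T).

Definition cycle_edges v : {set {set T}} := [set [set v i; v (ordS i)] | i : 'I_8].
Definition cycle_vertices v : {set T} := [set v i | i : 'I_8].
Definition is_cycle_map e v := injective v /\ forall i, e (v i) (v (ordS i)).
Definition edge_at v i x y :=
  (v i == x) && (v (ordS i) == y) || (v i == y) && (v (ordS i) == x).
Definition shared_edge u v i j := edge_at v j (u i) (u (ordS i)).

Lemma is_8cycle_edges e v : is_cycle_map e v -> is_8cycle e (cycle_edges v).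
Proof. by case=> v_inj v_adj; exists v. Qed.

Lemma is_cycle_map_sub e1 e v : subrel e1 e -> is_cycle_map e1 v -> is_cycle_map e v.
Proof. by move=> sub [v_inj v_adj]; split=> // i; apply: sub. Qed.

Lemma edge_at_rel e v i x y : is_cycle_map e v -> edge_at v i x y -> e x y || e y x.
Proof.
by case=> _ v_adj /orP[] /andP[/eqP <- /eqP <-]; rewrite v_adj ?orbT.
Qed.

Lemma cycle_edges_neq0 v : cycle_edges v != set0.
Proof. by apply/set0Pn; exists [set v ord0; v (ordS ord0)]; apply: imset_f. Qed.

Lemma cover_cycle_edges v : cyc_verts (cycle_edges v) = cycle_vertices v.
Proof.
apply/setP => x; rewrite /cyc_verts cover_imset; apply/bigcupP/imsetP.
- by case=> i _ /set2P[] ->; [exists i | exists (ordS i)].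
- by case=> i _ ->; exists i => //; apply: set21.
Qed.

Lemma eq_set2 (a b x y : T) :
  [set a; b] = [set x; y] -> (x == a) && (y == b) || (x == b) && (y == a).
Proof.
move=> eq_ab.
have /set2P ha : a \in [set x; y] by rewrite -eq_ab set21.
have /set2P hb : b \in [set x; y] by rewrite -eq_ab set22.
have /set2P hx : x \in [set a; b] by rewrite eq_ab set21.
have /set2P hy : y \in [set a; b] by rewrite eq_ab set22.
by case: ha hb hx hy => -> [] -> [] ? [] ?; subst; rewrite !eqxx ?orbT.
Qed.

Lemma common_cycle_edge u v E :
  E \in cycle_edges u -> E \in cycle_edges v -> exists i j, shared_edge u v i j.
Proof.
by case/imsetP=> i _ -> /imsetP[j _ /eq_set2 eq_uv]; exists i, j.
Qed.

End CycleMaps.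

Section IndexedDecompositions.
Variables (T : finType) (e : rel T).

Definition indexed_decomp (I : finType) (c : I -> 'I_8 -> T) :=
  [/\ forall k, is_cycle_map e (c k),
      forall x y, e x y -> exists k i, edge_at (c k) i x y
    & forall k l i j, shared_edge (c k) (c l) i j -> k = l].

Definition paired_decomp (I : finType) (c p : I -> 'I_8 -> T) :=
  [/\ indexed_decomp c, indexed_decomp p,
      forall k, cycle_vertices (c k) = cycle_vertices (p k)
    & forall k i j, ~~ shared_edge (c k) (p k) i j].

Definition has_paired_decomp :=
  exists (I : finType) (c p : I -> 'I_8 -> T), paired_decomp c p.

Section Family.
Variables (I : finType) (c : I -> 'I_8 -> T).
Hypothesis c_decomp : indexed_decomp c.

Lemma indexed_decomp_inj : injective (fun k => cycle_edges (c k)).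
Proof.
case: c_decomp => _ _ c_disj k l eq_kl.
have E_k : [set c k ord0; c k (ordS ord0)] \in cycle_edges (c k) by apply: imset_f.
have E_l := E_k; rewrite eq_kl in E_l.
by have [i [j /c_disj]] := common_cycle_edge E_k E_l.
Qed.

Lemma indexed_decomp_8cycle_decomp :
  is_8cycle_decomp e [set cycle_edges (c k) | k in I].
Proof.
case: c_decomp => c_cyc c_cover c_disj; split.
  by move=> C /imsetP[k _ ->]; apply: is_8cycle_edges.
apply/and3P; split.
- apply/eqP/setP=> E; rewrite cover_imset; apply/bigcupP/imsetP.
  + case=> k _ /imsetP[i _ ->]; exists (c k i, c k (ordS i)) => //.
    by rewrite inE; case: (c_cyc k) => _ ->.
  + case=> -[x y]; rewrite inE /= => /c_cover[k [i xy_at]] ->.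
    exists k => //; apply/imsetP; exists i => //.
    by case/orP: xy_at => /andP[/eqP<- /eqP<-]; rewrite // setUC.
- apply/trivIsetP=> _ _ /imsetP[k _ ->] /imsetP[l _ ->] neq_kl.
  rewrite disjoint_subset; apply/subsetP=> E E_k; apply/negP=> E_l.
  have [i [j /c_disj eq_kl]] := common_cycle_edge E_k E_l.
  by rewrite eq_kl eqxx in neq_kl.
- by apply/imsetP=> -[k _ /eqP]; rewrite eq_sym (negbTE (cycle_edges_neq0 _)).
Qed.

End Family.

Lemma inside_cycle_edges u v :
  is_cycle_map e v -> cycle_vertices u = cycle_vertices v ->
  (forall i j, ~~ shared_edge u v i j) ->
  inside_8cycle e (cycle_edges u) (cycle_edges v).
Proof.
move=> v_cyc eq_uv no_shared; split; first exact: is_8cycle_edges.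
  by rewrite !cover_cycle_edges.
rewrite disjoint_subset; apply/subsetP=> E E_v; apply/negP=> E_u.
by have [i [j]] := common_cycle_edge E_u E_v; apply/negP.
Qed.

Lemma paired_decomp_A2P : has_paired_decomp -> has_A2P_8cycle_decomp e.
Proof.
case=> I [c [p [c_decomp p_decomp eq_verts no_shared]]].
have [p_cyc _ _] := p_decomp.
pose f C := if [pick k | cycle_edges (c k) == C] is Some k then cycle_edges (p k) else C.
have fE k : f (cycle_edges (c k)) = cycle_edges (p k).
  rewrite /f; case: pickP => [l /eqP /(indexed_decomp_inj c_decomp) -> // | none].
  by move: (none k); rewrite eqxx.
exists [set cycle_edges (c k) | k in I]; split.
  exact: indexed_decomp_8cycle_decomp.
exists f; split.
- move=> _ _ /imsetP[k _ ->] /imsetP[l _ ->]; rewrite !fE.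
  by move/(indexed_decomp_inj p_decomp) ->.
- move=> _ /imsetP[k _ ->]; rewrite fE.
  exact: inside_cycle_edges (p_cyc k) (eq_verts k) (no_shared k).
- rewrite -imset_comp (eq_imset _ fE).
  exact: indexed_decomp_8cycle_decomp.
Qed.

End IndexedDecompositions.

Definition sum_family (I1 I2 X : Type) (c1 : I1 -> X) (c2 : I2 -> X) (k : I1 + I2) : X :=
  match k with inl a => c1 a | inr b => c2 b end.

Section SplitDecomposition.
Variables (T : finType) (e P : rel T).
Hypothesis P_sym : symmetric P.

Lemma edge_at_restrict (Q : rel T) v i x y : symmetric Q ->
  is_cycle_map [rel x y | e x y && Q x y] v -> edge_at v i x y -> Q x y.
Proof.
move=> Q_sym v_cyc /(edge_at_rel v_cyc) /=.
by case/orP=> /andP[_]; rewrite // Q_sym.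
Qed.

Lemma indexed_decomp_split (I1 I2 : finType) c1 c2 :
  indexed_decomp [rel x y | e x y && P x y] c1 ->
  indexed_decomp [rel x y | e x y && ~~ P x y] c2 ->
  indexed_decomp e (@sum_family I1 I2 _ c1 c2).
Proof.
case=> c1_cyc c1_cover c1_disj [c2_cyc c2_cover c2_disj].
have nP_sym : symmetric (fun x y => ~~ P x y) by move=> x y; rewrite P_sym.
have no_cross k l i j :
  ~~ shared_edge (c1 k) (c2 l) i j && ~~ shared_edge (c2 l) (c1 k) j i.
  have [_ /(_ i) /andP[_ P_k]] := c1_cyc k; have [_ /(_ j) /andP[_ nP_l]] := c2_cyc l.
  apply/andP; split; apply/negP.
    by move/(edge_at_restrict nP_sym (c2_cyc l)); rewrite P_k.
  by move/(edge_at_restrict P_sym (c1_cyc k)); rewrite (negbTE nP_l).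
split.
- have sub_P : subrel [rel x y | e x y && P x y] e by move=> x y /andP[].
  have sub_nP : subrel [rel x y | e x y && ~~ P x y] e by move=> x y /andP[].
  by case=> k; [exact: is_cycle_map_sub sub_P (c1_cyc k)
               | exact: is_cycle_map_sub sub_nP (c2_cyc k)].
- move=> x y e_xy; case P_xy: (P x y).
    by have [|k [i xy_at]] := c1_cover x y; [rewrite /= e_xy P_xy | exists (inl k), i].
  by have [|k [i xy_at]] := c2_cover x y; [rewrite /= e_xy P_xy | exists (inr k), i].
- case=> k [] l i j /=.
  + by move/c1_disj ->.
  + by case/andP: (no_cross k l i j) => /negP.
  + by case/andP: (no_cross l k j i) => _ /negP.
  + by move/c2_disj ->.
Qed.

Lemma paired_decomp_split :
  has_paired_decomp [rel x y | e x y && P x y] ->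
  has_paired_decomp [rel x y | e x y && ~~ P x y] -> has_paired_decomp e.
Proof.
case=> I1 [c1 [p1 [c1_decomp p1_decomp verts1 inside1]]].
case=> I2 [c2 [p2 [c2_decomp p2_decomp verts2 inside2]]].
exists (I1 + I2)%type, (sum_family c1 c2), (sum_family p1 p2).
split; [exact: indexed_decomp_split c1_decomp c2_decomp
       | exact: indexed_decomp_split p1_decomp p2_decomp | by case | by case].
Qed.

End SplitDecomposition.

Section Embedding.
Variables (T1 T : finType) (e1 : rel T1) (e : rel T) (g : T1 -> T).
Hypotheses (g_inj : injective g) (g_rel : forall a b, e (g a) (g b) = e1 a b).
Hypothesis g_onto : forall x y, e x y -> exists a b, x = g a /\ y = g b.

Lemma edge_at_comp v i a b : edge_at (g \o v) i (g a) (g b) = edge_at v i a b.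
Proof. by rewrite /edge_at /= !(inj_eq g_inj). Qed.

Lemma shared_edge_comp u v i j : shared_edge (g \o u) (g \o v) i j = shared_edge u v i j.
Proof. exact: edge_at_comp. Qed.

Lemma cycle_vertices_comp v : cycle_vertices (g \o v) = g @: cycle_vertices v.
Proof. by rewrite /cycle_vertices -imset_comp. Qed.

Lemma is_cycle_map_comp v : is_cycle_map e1 v -> is_cycle_map e (g \o v).
Proof. by case=> v_inj v_adj; split=> [|i]; [apply: inj_comp | rewrite /= g_rel]. Qed.

Lemma indexed_decomp_comp (I : finType) (c : I -> 'I_8 -> T1) :
  indexed_decomp e1 c -> indexed_decomp e (fun k => g \o c k).
Proof.
case=> c_cyc c_cover c_disj; split=> [k | x y | k l i j].
- exact: is_cycle_map_comp.
- move=> /[dup] /g_onto[a [b [-> ->]]]; rewrite g_rel => /c_cover[k [i ab_at]].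
  by exists k, i; rewrite edge_at_comp.
- by rewrite shared_edge_comp; apply: c_disj.
Qed.

Lemma paired_decomp_comp : has_paired_decomp e1 -> has_paired_decomp e.
Proof.
case=> I [c [p [c_decomp p_decomp eq_verts no_shared]]].
exists I, (fun k => g \o c k), (fun k => g \o p k).
split=> [||k|k i j]; try exact: indexed_decomp_comp.
  by rewrite !cycle_vertices_comp eq_verts.
by rewrite shared_edge_comp.
Qed.

End Embedding.

(* [enum 'I_n] does not reduce under [vm_compute] ([insub] goes through the
   opaque [idP]), so the finite checks below enumerate ordinals by hand. *)
Fixpoint ord_seq n : seq 'I_n :=
  if n is n'.+1 then ord0 :: map (lift ord0) (ord_seq n') else [::].

Lemma mem_ord_seq n (i : 'I_n) : i \in ord_seq n.
Proof.
elim: n i => [[] //|n IHn] i; rewrite inE.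
by case: (unliftP ord0 i) => [j ->|->]; rewrite ?eqxx // mem_map ?IHn ?orbT //; apply: lift_inj.
Qed.

Definition all_ord n (P : pred 'I_n) := all P (ord_seq n).
Definition has_ord n (P : pred 'I_n) := has P (ord_seq n).

Lemma all_ordP n (P : pred 'I_n) : reflect (forall i, P i) (all_ord P).
Proof. by apply: (iffP allP) => P_all i *; apply: P_all; rewrite ?mem_ord_seq. Qed.

Lemma has_ordP n (P : pred 'I_n) : reflect (exists i, P i) (has_ord P).
Proof. by apply: (iffP hasP) => [[i _ Pi] | [i Pi]]; exists i; rewrite ?mem_ord_seq. Qed.

Section Checker.
Variables (T : finType) (enumT : seq T) (e : rel T).
Hypothesis enumT_full : forall x, x \in enumT.

Definition is_cycle_mapb (v : 'I_8 -> T) :=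
  all_ord (fun i => all_ord (fun j => (v i == v j) ==> (i == j))) &&
  all_ord (fun i => e (v i) (v (ordS i))).

Definition indexed_decompb n (c : 'I_n -> 'I_8 -> T) :=
  [&& all_ord (fun k => is_cycle_mapb (c k)),
      all (fun x => all (fun y => e x y ==>
        has_ord (fun k => has_ord (fun i => edge_at (c k) i x y))) enumT) enumT
    & all_ord (fun k => all_ord (fun l => all_ord (fun i => all_ord (fun j =>
        shared_edge (c k) (c l) i j ==> (k == l)))))].

Definition same_verticesb (u v : 'I_8 -> T) :=
  all_ord (fun i => has_ord (fun j => u i == v j)) &&
  all_ord (fun j => has_ord (fun i => u i == v j)).

Definition paired_decompb n (c p : 'I_n -> 'I_8 -> T) :=
  [&& indexed_decompb c, indexed_decompb p,
      all_ord (fun k => same_verticesb (c k) (p k))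
    & all_ord (fun k => all_ord (fun i => all_ord (fun j =>
        ~~ shared_edge (c k) (p k) i j)))].

Lemma is_cycle_mapb_sound v : is_cycle_mapb v -> is_cycle_map e v.
Proof.
case/andP=> /all_ordP v_inj /all_ordP v_adj; split=> // i j /eqP eq_ij.
by apply/eqP; move/all_ordP: (v_inj i) => /(_ j); rewrite eq_ij.
Qed.

Lemma indexed_decompb_sound n (c : 'I_n -> 'I_8 -> T) :
  indexed_decompb c -> indexed_decomp e c.
Proof.
case/and3P=> /all_ordP c_cyc /allP c_cover /all_ordP c_disj; split=> [k|x y e_xy|k l i j].
- exact: is_cycle_mapb_sound.
- move/allP: (c_cover x (enumT_full x)) => /(_ y (enumT_full y)).
  by rewrite e_xy => /has_ordP[k /has_ordP[i xy_at]]; exists k, i.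
- move/all_ordP: (c_disj k) => /(_ l) /all_ordP /(_ i) /all_ordP /(_ j).
  by move=> /implyP shared_eq /shared_eq /eqP.
Qed.

Lemma same_verticesb_sound u v : same_verticesb u v -> cycle_vertices u = cycle_vertices v.
Proof.
case/andP=> /all_ordP uv /all_ordP vu; apply/setP=> x; apply/imsetP/imsetP=> -[i _ ->].
  by have /has_ordP[j /eqP->] := uv i; exists j.
by have /has_ordP[j /eqP<-] := vu i; exists j.
Qed.

Lemma paired_decompb_sound n (c p : 'I_n -> 'I_8 -> T) :
  paired_decompb c p -> has_paired_decomp e.
Proof.
case/and4P=> /indexed_decompb_sound c_decomp /indexed_decompb_sound p_decomp.
move=> /all_ordP same_verts /all_ordP no_shared; exists 'I_n, c, p; split=> // [k|k i j].
  exact: same_verticesb_sound.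
by move/all_ordP: (no_shared k) => /(_ i) /all_ordP.
Qed.

End Checker.

Definition sum_map (A A' B B' : Type) (f : A -> A') (h : B -> B') (x : A + B) : A' + B' :=
  match x with inl a => inl (f a) | inr b => inr (h b) end.

Definition sum_swap (A B : Type) (x : A + B) : B + A :=
  match x with inl a => inr a | inr b => inl b end.

Lemma sum_map_inj (A A' B B' : Type) (f : A -> A') (h : B -> B') :
  injective f -> injective h -> injective (sum_map f h).
Proof. by move=> f_inj h_inj [a|b] [a'|b'] //= [] => [/f_inj|/h_inj] ->. Qed.

Lemma sum_swapK (A B : Type) : cancel (@sum_swap A B) (@sum_swap B A).
Proof. by case. Qed.

Section CompleteBipartite.
Local Notation K := Kbip_rel.

Lemma Kbip_swap m n : has_paired_decomp (K m n) -> has_paired_decomp (K n m).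
Proof.
apply: (paired_decomp_comp (can_inj (@sum_swapK _ _))) => [[a|a] [b|b] //|x y _].
by exists (sum_swap x), (sum_swap y); rewrite !sum_swapK.
Qed.

Definition in_first m m' n (x : 'I_(m + m') + 'I_n) : bool :=
  if x is inl a then a < m else true.
Arguments in_first m {m' n} x.

Lemma Kbip_addl m m' n :
  has_paired_decomp (K m n) -> has_paired_decomp (K m' n) -> has_paired_decomp (K (m + m') n).
Proof.
pose P (x y : 'I_(m + m') + 'I_n) := in_first m x && in_first m y.
have P_sym : symmetric P by move=> x y; rewrite /P andbC.
have lt_rshift (j : 'I_m') : rshift m j < m = false by rewrite /= ltnNge leq_addr.
move=> Kmn Km'n; apply: (paired_decomp_split P_sym).
- apply: (paired_decomp_comp (sum_map_inj (@lshift_inj m m') (@inj_id _))) Kmn.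
    by case=> a [] b; rewrite //= /P /= ltn_ord.
  case=> [a|b] [a'|b']; rewrite //= /P /= ?andbT;
    [rewrite -(splitK a) | rewrite -(splitK a')]; case: split => j /=;
    rewrite ?lt_rshift // => _; by [exists (inl j), (inr b') | exists (inr b), (inl j)].
- apply: (paired_decomp_comp (sum_map_inj (@rshift_inj m m') (@inj_id _))) Km'n.
    by case=> a [] b; rewrite //= /P /= lt_rshift.
  case=> [a|b] [a'|b']; rewrite //= /P /= ?andbT;
    [rewrite -(splitK a) | rewrite -(splitK a')]; case: split => j /=;
    rewrite ?ltn_ord // => _; by [exists (inl j), (inr b') | exists (inr b), (inl j)].
Qed.

Lemma Kbip_addr m n n' :
  has_paired_decomp (K m n) -> has_paired_decomp (K m n') -> has_paired_decomp (K m (n + n')).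
Proof. by move=> /Kbip_swap Knm /Kbip_swap Kn'm; apply/Kbip_swap/Kbip_addl. Qed.

End CompleteBipartite.

(* The cycle [w] of [K_(m+1, n+1)]: its vertex number [i] is vertex [nth 0 w i]
   of the first side when [i] is even and of the second side when [i] is odd. *)
Definition bip_cycle m n (w : seq nat) (i : 'I_8) : 'I_m.+1 + 'I_n.+1 :=
  if odd i then inr (nth ord0 (ord_seq n.+1) (nth 0 w i))
  else inl (nth ord0 (ord_seq m.+1) (nth 0 w i)).

Definition sum_ord_seq m n : seq ('I_m + 'I_n) := map inl (ord_seq m) ++ map inr (ord_seq n).

Lemma mem_sum_ord_seq m n x : x \in sum_ord_seq m n.
Proof.
by rewrite mem_cat; case: x => i; rewrite ?(mem_map inl_inj) ?(mem_map inr_inj) mem_ord_seq ?orbT.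
Qed.

(* Each row is an 8-cycle together with the inside 8-cycle paired with it. *)
Definition bip_paired_decompb m n (rows : seq (seq nat * seq nat)) :=
  paired_decompb (sum_ord_seq m.+1 n.+1) (Kbip_rel m.+1 n.+1)
    (fun k : 'I_(size rows) => bip_cycle m n (nth [::] (unzip1 rows) k))
    (fun k : 'I_(size rows) => bip_cycle m n (nth [::] (unzip2 rows) k)).

Lemma bip_paired_decompb_sound m n rows :
  bip_paired_decompb m n rows -> has_paired_decomp (Kbip_rel m.+1 n.+1).
Proof. exact/paired_decompb_sound/mem_sum_ord_seq. Qed.

Lemma Kbip_4_4 : has_paired_decomp (Kbip_rel 4 4).
Proof.
apply: (@bip_paired_decompb_sound 3 3
  [:: ([:: 0; 0; 1; 1; 2; 2; 3; 3], [:: 0; 1; 3; 0; 2; 3; 1; 2]);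
      ([:: 0; 1; 3; 0; 2; 3; 1; 2], [:: 0; 0; 1; 1; 2; 2; 3; 3])]).
by vm_compute.
Qed.

Lemma Kbip_4_6 : has_paired_decomp (Kbip_rel 4 6).
Proof.
apply: (@bip_paired_decompb_sound 3 5
  [:: ([:: 0; 0; 1; 1; 2; 2; 3; 3], [:: 2; 3; 1; 2; 0; 1; 3; 0]);
      ([:: 0; 4; 1; 5; 2; 0; 3; 1], [:: 0; 0; 1; 1; 2; 4; 3; 5]);
      ([:: 0; 2; 1; 3; 2; 4; 3; 5], [:: 1; 4; 0; 3; 3; 2; 2; 5])]).
by vm_compute.
Qed.

Lemma Kbip_4_4s2 s : 0 < s -> has_paired_decomp (Kbip_rel 4 (4 * s + 2)).
Proof.
case: s => // s _; elim: s => [|s IHs]; first exact: Kbip_4_6.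
have -> : 4 * s.+2 + 2 = (4 * s.+1 + 2) + 4 by lia.
exact: Kbip_addr IHs Kbip_4_4.
Qed.

Theorem lemma2p2 (t s : nat) : 0 < t -> 0 < s ->
  has_A2P_8cycle_decomp (Kbip_rel (4 * t) (4 * s + 2)).
Proof.
move=> t_gt0 s_gt0; apply: paired_decomp_A2P.
case: t t_gt0 => // t _; elim: t => [|t IHt]; first exact: Kbip_4_4s2.
have -> : 4 * t.+2 = 4 * t.+1 + 4 by lia.
exact: Kbip_addl IHt (Kbip_4_4s2 s_gt0).
Qed.
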